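(* Let $K\subseteq L\subseteq \mathfrak U\subseteq\mathcal A$ be differential fields of characteristic $0$, where $\mathcal A$ is a saturated differentially closed field with $|\mathfrak U|<|\mathcal A|$, and suppose $L/K$ is a strongly normal extension. Then there is an embedding of the group $gal(L/K)$ into the group $Gal(L/K)$. Moreover, every $\sigma\in Hom_K(L,\mathfrak U)$ extends uniquely to an element of $Gal(L/K)$, and this extension restricts to an element of $Gal_{\mathfrak U}(L/K)$.
   Context: For a differential field $F$, $C_F$ is its field of constants. $\langle A,B\rangle$ denotes the differential field generated by $A\cup B$ inside $\mathcal A$. $Hom_K(L,M)$ is the set of differential field embeddings of $L$ into $M$ that fix $K$ pointwise. An element $\tau\in Hom_K(L,\mathcal A)$ is strong if $\tau$ is the identity on $C_L$ and $\langle L,C_{\mathcal A}\rangle=\langle\tau(L),C_{\mathcal A}\rangle$. $L/K$ is strongly normal if $L$ is finitely generated as a differential field over $K$ and every $\tau\in Hom_K(L,\mathcal A)$ is strong. $gal(L/K)$ is the group of differential field automorphisms of $L$ fixing $K$; $Gal(L/K)$ is the group of differential field automorphisms of $\langle L,C_{\mathcal A}\rangle$ fixing $\langle K,C_{\mathcal A}\rangle$ pointwise; $Gal_{\mathfrak U}(L/K)$ is the group of differential field automorphisms of $\langle L,C_{\mathfrak U}\rangle$ fixing $\langle K,C_{\mathfrak U}\rangle$ pointwise. *)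

From Stdlib Require Import List.
From HB Require Import structures.
From mathcomp Require Import all_boot all_order all_algebra.
From mathcomp Require Import mpoly.
Set Implicit Arguments. Unset Strict Implicit. Unset Printing Implicit Defensive.
Import GRing.Theory.
Local Open Scope ring_scope.

(* A differential field is a field A together with a derivation D.
   Differential subfields of the ambient field are predicates on A. *)
Section Diff.
Variables (A : fieldType) (D : A -> A).

Definition derivation : Prop :=
  (forall x y, D (x + y) = D x + D y) /\ (forall x y, D (x * y) = D x * y + x * D y).

Definition char0 : Prop := forall n : nat, (n.+1)%:R != 0 :> A.

Definition dsubfield (F : A -> Prop) : Prop :=
  F 0 /\ F 1 /\ (forall x y, F x -> F y -> F (x - y)) /\
  (forall x y, F x -> F y -> F (x * y)) /\
  (forall x, F x -> F x^-1) /\ (forall x, F x -> F (D x)).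

Definition subset_of (E F : A -> Prop) : Prop := forall x, E x -> F x.

Definition consts (F : A -> Prop) : A -> Prop := fun x => F x /\ D x = 0.

Definition gen (E F : A -> Prop) : A -> Prop :=
  fun x => forall G, dsubfield G -> subset_of E G -> subset_of F G -> G x.

Definition image (f : A -> A) (E : A -> Prop) : A -> Prop :=
  fun y => exists2 x, E x & f x = y.

Definition dhom (K L M : A -> Prop) (f : A -> A) : Prop :=
  (forall x y, L x -> L y -> f (x + y) = f x + f y) /\
  (forall x y, L x -> L y -> f (x * y) = f x * f y) /\
  f 1 = 1 /\
  (forall x, L x -> f (D x) = D (f x)) /\
  (forall x y, L x -> L y -> f x = f y -> x = y) /\
  (forall x, L x -> M (f x)) /\
  (forall x, K x -> f x = x).

Definition dauto (F E : A -> Prop) (f : A -> A) : Prop :=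
  dhom F E E f /\ (forall y, E y -> exists2 x, E x & f x = y).

Definition allA : A -> Prop := fun _ => True.

Definition CA : A -> Prop := consts allA.

Definition strong (L : A -> Prop) (f : A -> A) : Prop :=
  (forall x, consts L x -> f x = x) /\
  (forall x, gen L CA x <-> gen (image f L) CA x).

Definition strongly_normal (K L : A -> Prop) : Prop :=
  (exists s : seq A, forall x, L x <-> gen K (fun y => y \in s) x) /\
  (forall f, dhom K L allA f -> strong L f).

(* gal(L/K), Gal(L/K), Gal_U(L/K), as predicates on maps A -> A
   (only the restriction to the relevant domain matters) *)
Definition gal_small (K L : A -> Prop) := dauto K L.
Definition Gal (K L : A -> Prop) := dauto (gen K CA) (gen L CA).
Definition GalU (U K L : A -> Prop) := dauto (gen K (consts U)) (gen L (consts U)).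

(* a differential polynomial of order <= n in one variable X, in the
   variables X, DX, ..., D^n X *)
Definition deval (n : nat) (p : {mpoly A[n.+1]}) (a : A) : A :=
  p.@[fun i : 'I_n.+1 => iter i D a].

Definition involves (n : nat) (p : {mpoly A[n.+1]}) (i : 'I_n.+1) : Prop :=
  exists2 m, m \in msupp p & (0 < m i)%N.

(* ord g < ord f, with the convention that the order of a polynomial
   involving no variable is -1 *)
Definition ord_lt (n : nat) (g f : {mpoly A[n.+1]}) : Prop :=
  exists2 j, involves f j & forall i, involves g i -> (i < j)%N.

Definition diff_closed : Prop :=
  forall (n : nat) (f g : {mpoly A[n.+1]}), g != 0 -> ord_lt g f ->
    exists a, deval f a = 0 /\ deval g a != 0.

End Diff.

Inductive dterm (A : Type) :=
| DVar of nat
| DConst of A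
| DAdd of dterm A & dterm A
| DOpp of dterm A
| DMul of dterm A & dterm A
| DDer of dterm A.

Inductive dform (A : Type) :=
| DEq of dterm A & dterm A
| DNot of dform A
| DAnd of dform A & dform A
| DEx of nat & dform A.

Section Sem.
Variables (A : fieldType) (D : A -> A).

Fixpoint teval (e : nat -> A) (t : dterm A) : A :=
  match t with
  | DVar i => e i
  | DConst c => c
  | DAdd t1 t2 => teval e t1 + teval e t2
  | DOpp t1 => - teval e t1
  | DMul t1 t2 => teval e t1 * teval e t2
  | DDer t1 => D (teval e t1)
  end.

Definition upd (e : nat -> A) (i : nat) (a : A) : nat -> A :=
  fun j => if j == i then a else e j.

Fixpoint holds (e : nat -> A) (f : dform A) : Prop :=
  match f with
  | DEq t1 t2 => teval e t1 = teval e t2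
  | DNot f1 => ~ holds e f1
  | DAnd f1 f2 => holds e f1 /\ holds e f2
  | DEx i f1 => exists a, holds (upd e i a) f1
  end.

Fixpoint tparams (B : A -> Prop) (t : dterm A) : Prop :=
  match t with
  | DVar _ => True
  | DConst c => B c
  | DAdd t1 t2 | DMul t1 t2 => tparams B t1 /\ tparams B t2
  | DOpp t1 | DDer t1 => tparams B t1
  end.

Fixpoint params (B : A -> Prop) (f : dform A) : Prop :=
  match f with
  | DEq t1 t2 => tparams B t1 /\ tparams B t2
  | DNot f1 => params B f1
  | DAnd f1 f2 => params B f1 /\ params B f2
  | DEx _ f1 => params B f1
  end.

(* a formula in one free variable x: all free variables are read as x *)
Definition sat1 (a : A) (f : dform A) : Prop := holds (fun _ => a) f.

Definition smaller_than_A (B : A -> Prop) : Prop :=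
  ~ exists h : A -> {x : A | B x}, injective h.

Definition saturated : Prop :=
  forall (B : A -> Prop), smaller_than_A B ->
  forall (P : dform A -> Prop), (forall f, P f -> params B f) ->
  (forall l : seq (dform A), (forall f, In f l -> P f) ->
      exists a, forall f, In f l -> sat1 a f) ->
  exists a, forall f, P f -> sat1 a f.

End Sem.

From Pilot Require Import Defs.
From HB Require Import structures.
From mathcomp Require Import all_boot all_order all_algebra.
From mathcomp Require Import ring.
From Stdlib Require Import Classical ClassicalEpsilon.
Set Implicit Arguments. Unset Strict Implicit. Unset Printing Implicit Defensive.
Import GRing.Theory.
Local Open Scope ring_scope.

(* Let sg be a differential embedding of L fixing the constants of L. The constants
   of A are linearly disjoint from L over C_L: for constants c_i and c,
   sum a_i c_i = c holds iff sum sg(a_i) c_i = c. Differentiating kills the c_i, so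
   after dividing by a coefficient with nonzero derivative one term can be eliminated;
   the argument is symmetric in sg and its inverse. Hence sum a_i c_i |-> sum sg(a_i) c_i
   is a well defined injective differential ring map on the L-span of C_A, and its
   extension to quotients of such sums, which make up L<C_A>, fixes K<C_A> and extends
   sg. Strong normality, L<C_A> = sg(L)<C_A>, makes it onto, and it is unique because
   L and C_A generate. An element of U lying in M<C_A> already lies in M<C_U>, since a
   linear equation over U with a constant solution on which another form does not
   vanish has such a solution in C_U; this yields the restriction to Gal_U(L/K).
   Extending the elements of gal(L/K) gives the group embedding. *)

Section Sums.
Variables (R : fieldType) (T : Type).

Lemma sum_mul_shift (r : seq T) (f g c : T -> R) (k : R) :
  \sum_(t <- r) (f t + k * g t) * c t =
  \sum_(t <- r) f t * c t + k * \sum_(t <- r) g t * c t.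
Proof. by rewrite mulr_sumr -big_split; apply: eq_bigr => t _ /=; ring. Qed.

Lemma sum_mul_isolate (r : seq T) (f c : T -> R) (e x : R) : e != 0 ->
  e * x + \sum_(t <- r) f t * c t = 0 -> x = \sum_(t <- r) (- f t / e) * c t.
Proof.
move=> ne h; have ex : e * x = - \sum_(t <- r) f t * c t by apply/eqP; rewrite -addr_eq0 h.
by rewrite -[x](mulKf ne) ex -sumrN mulr_sumr; apply: eq_bigr => t _; field.
Qed.

End Sums.

Lemma perm_map_fst_mem (T S : eqType) (s s' : seq (T * S)) y :
  perm_eq (map fst s') (map fst s) -> y \in s' -> exists2 z, z \in s & z.1 = y.1.
Proof.
move=> pss' ys'; have : y.1 \in map fst s by rewrite -(perm_mem pss') map_f.
by case/mapP=> z zs ->; exists z.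
Qed.

Section DifferentialField.
Variables (A : fieldType) (D : A -> A).
Hypothesis hD : derivation D.

Lemma derD x y : D (x + y) = D x + D y. Proof. exact: hD.1. Qed.
Lemma derM x y : D (x * y) = D x * y + x * D y. Proof. exact: hD.2. Qed.

Lemma der0 : D 0 = 0.
Proof. by apply: (addrI (D 0)); rewrite -derD !addr0. Qed.

Lemma der1 : D 1 = 0.
Proof.
have h := derM 1 1; rewrite !mulr1 mul1r in h.
by apply: (addrI (D 1)); rewrite addr0 -h.
Qed.

Lemma derN x : D (- x) = - D x.
Proof. by apply: (addrI (D x)); rewrite -derD !subrr der0. Qed.

Lemma derB x y : D (x - y) = D x - D y. Proof. by rewrite derD derN. Qed.

Lemma derV x : D x^-1 = - D x / (x * x).
Proof.
have [->|nx] := eqVneq x 0; first by rewrite invr0 der0 oppr0 mul0r.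
have h : D x * x^-1 + x * D x^-1 = 0 by rewrite -derM mulfV ?der1.
have e : x * D x^-1 = - (D x * x^-1) by apply: (addrI (D x * x^-1)); rewrite h subrr.
by rewrite -[D x^-1](mulKf nx) e; field.
Qed.

Lemma der_div x y : D (x / y) = (D x * y - x * D y) / (y * y).
Proof.
have [->|ny] := eqVneq y 0; first by rewrite !(mulr0, invr0, der0).
by rewrite derM derV; field.
Qed.

Lemma der_sum_consts (T : eqType) (s : seq T) (a c : T -> A) :
  (forall t, t \in s -> D (c t) = 0) ->
  D (\sum_(t <- s) a t * c t) = \sum_(t <- s) D (a t) * c t.
Proof.
elim: s => [|t s IH] hc; first by rewrite !big_nil der0.
rewrite !big_cons derD derM hc ?mem_head // mulr0 addr0 IH // => u us.
by apply: hc; rewrite in_cons us orbT.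
Qed.

Section Subfield.
Variable F : A -> Prop.
Hypothesis HF : dsubfield D F.

Lemma dsub0 : F 0. Proof. by case: HF. Qed.
Lemma dsub1 : F 1. Proof. by case: HF => _ []. Qed.
Lemma dsubB x y : F x -> F y -> F (x - y). Proof. by case: HF => _ [_ [h _]]; apply: h. Qed.
Lemma dsubM x y : F x -> F y -> F (x * y). Proof. by case: HF => _ [_ [_ [h _]]]; apply: h. Qed.
Lemma dsubV x : F x -> F x^-1. Proof. by case: HF => _ [_ [_ [_ [h _]]]]; apply: h. Qed.
Lemma dsub_der x : F x -> F (D x). Proof. by case: HF => _ [_ [_ [_ [_ h]]]]; apply: h. Qed.
Lemma dsubN x : F x -> F (- x).
Proof. by move=> Fx; rewrite -sub0r; apply: dsubB => //; apply: dsub0. Qed.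
Lemma dsubD x y : F x -> F y -> F (x + y).
Proof. by move=> Fx Fy; rewrite -[y]opprK; apply/dsubB/dsubN. Qed.
Lemma dsub_div x y : F x -> F y -> F (x / y). Proof. by move=> Fx Fy; apply/dsubM/dsubV. Qed.

Lemma dsub_sum (T : eqType) (s : seq T) (a : T -> A) :
  (forall t, t \in s -> F (a t)) -> F (\sum_(t <- s) a t).
Proof.
move=> Fa; rewrite big_seq; apply: big_ind => [|x y|t /Fa //]; [exact: dsub0 | exact: dsubD].
Qed.

Lemma consts_dsub : dsubfield D (consts D F).
Proof.
split; [|split; [|split; [|split; [|split]]]].
- by split; [exact: dsub0 | exact: der0].
- by split; [exact: dsub1 | exact: der1].
- by move=> x y [Fx Dx] [Fy Dy]; split; [exact: dsubB | rewrite derB Dx Dy subrr].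
- by move=> x y [Fx Dx] [Fy Dy]; split; [exact: dsubM | rewrite derM Dx Dy mul0r mulr0 addr0].
- by move=> x [Fx Dx]; split; [exact: dsubV | rewrite derV Dx oppr0 mul0r].
- by move=> x [Fx Dx]; split; rewrite Dx; [exact: dsub0 | exact: der0].
Qed.

End Subfield.

Lemma allA_dsub : dsubfield D (@allA A). Proof. by do 5 split. Qed.

Lemma consts_CA (F : A -> Prop) : subset_of (consts D F) (CA D).
Proof. by move=> x [_ Dx]. Qed.

Lemma gen_dsub (E F : A -> Prop) : dsubfield D (gen D E F).
Proof.
split; [|split; [|split; [|split; [|split]]]].
- by move=> G HG _ _; apply: dsub0.
- by move=> G HG _ _; apply: dsub1.
- by move=> x y hx hy G HG EG FG; apply: (dsubB HG); [apply: hx | apply: hy].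
- by move=> x y hx hy G HG EG FG; apply: (dsubM HG); [apply: hx | apply: hy].
- by move=> x hx G HG EG FG; apply: (dsubV HG); apply: hx.
- by move=> x hx G HG EG FG; apply: (dsub_der HG); apply: hx.
Qed.

Lemma gen_subl {E F : A -> Prop} {x : A} : E x -> gen D E F x.
Proof. by move=> Ex G _ EG _; apply: EG. Qed.

Lemma gen_subr {E F : A -> Prop} {x : A} : F x -> gen D E F x.
Proof. by move=> Fx G _ _ FG; apply: FG. Qed.

Lemma gen_min (E F G : A -> Prop) : dsubfield D G ->
  subset_of E G -> subset_of F G -> subset_of (gen D E F) G.
Proof. by move=> HG EG FG x; apply. Qed.

Lemma gen_mono (E E' F F' : A -> Prop) : subset_of E E' -> subset_of F F' ->
  subset_of (gen D E F) (gen D E' F').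
Proof.
move=> EE' FF'; apply: gen_min; first exact: gen_dsub.
- by move=> x /EE'; apply: gen_subl.
- by move=> x /FF'; apply: gen_subr.
Qed.

Record dmorph (G : A -> Prop) (f : A -> A) : Prop := DMorph {
  dmorphD : forall x y, G x -> G y -> f (x + y) = f x + f y;
  dmorphM : forall x y, G x -> G y -> f (x * y) = f x * f y;
  dmorph1 : f 1 = 1;
  dmorph_der : forall x, G x -> f (D x) = D (f x) }.

Lemma dmorph_id (G : A -> Prop) : dmorph G id. Proof. by []. Qed.

Lemma dmorph_sub (G G' : A -> Prop) f : subset_of G' G -> dmorph G f -> dmorph G' f.
Proof.
move=> G'G [fD fM f1 fder].
by split=> // [x y Gx Gy|x y Gx Gy|x Gx]; [apply: fD | apply: fM | apply: fder]; apply: G'G.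
Qed.

Lemma dhom_dmorph (K G M : A -> Prop) f : dhom D K G M f -> dmorph G f.
Proof. by case=> fD [fM [f1 [fder _]]]; split. Qed.

Section Morphism.
Variables (G : A -> Prop) (f : A -> A).
Hypotheses (HG : dsubfield D G) (Hf : dmorph G f).

Lemma dmorph0 : f 0 = 0.
Proof. by apply: (addrI (f 0)); rewrite -(dmorphD Hf) ?addr0 //; apply: dsub0. Qed.

Lemma dmorphN x : G x -> f (- x) = - f x.
Proof.
move=> Gx; apply: (addrI (f x)); rewrite -(dmorphD Hf) //; last exact: dsubN.
by rewrite !subrr dmorph0.
Qed.

Lemma dmorphB x y : G x -> G y -> f (x - y) = f x - f y.
Proof. by move=> Gx Gy; rewrite (dmorphD Hf) ?dmorphN //; apply: dsubN. Qed.

Lemma dmorphV x : G x -> f x^-1 = (f x)^-1.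
Proof.
move=> Gx; have [->|nx] := eqVneq x 0; first by rewrite invr0 dmorph0 invr0.
have h : f x * f x^-1 = 1 by rewrite -(dmorphM Hf) ?mulfV ?(dmorph1 Hf) //; apply: dsubV.
have nfx : f x != 0.
  by apply: contra_eq_neq h => ->; rewrite mul0r eq_sym oner_neq0.
by rewrite -[RHS]mulr1 -h mulKf.
Qed.

Lemma image_dsub : dsubfield D (Defs.image f G).
Proof.
split; [|split; [|split; [|split; [|split]]]].
- by exists 0; [exact: dsub0 | exact: dmorph0].
- by exists 1; [exact: dsub1 | exact: dmorph1 Hf].
- by move=> _ _ [x Gx <-] [y Gy <-]; exists (x - y); [exact: dsubB | exact: dmorphB].
- by move=> _ _ [x Gx <-] [y Gy <-]; exists (x * y); [exact: dsubM | exact: (dmorphM Hf Gx Gy)].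
- by move=> _ [x Gx <-]; exists x^-1; [exact: dsubV | exact: dmorphV].
- by move=> _ [x Gx <-]; exists (D x); [exact: dsub_der | exact: (dmorph_der Hf Gx)].
Qed.

Lemma preim_dsub (H : A -> Prop) : dsubfield D H -> dsubfield D (fun x => G x /\ H (f x)).
Proof.
move=> HH; split; [|split; [|split; [|split; [|split]]]].
- by split; [exact: dsub0 | rewrite dmorph0; exact: dsub0].
- by split; [exact: dsub1 | rewrite (dmorph1 Hf); exact: dsub1].
- by move=> x y [Gx Hx] [Gy Hy]; split; [exact: dsubB | rewrite dmorphB //; exact: dsubB].
- by move=> x y [Gx Hx] [Gy Hy]; split; [exact: dsubM | rewrite (dmorphM Hf) //; exact: dsubM].
- by move=> x [Gx Hx]; split; [exact: dsubV | rewrite dmorphV //; exact: dsubV].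
- by move=> x [Gx Hx]; split; [exact: dsub_der | rewrite (dmorph_der Hf) //; exact: dsub_der].
Qed.

End Morphism.

Lemma eqz_dsub (G : A -> Prop) f g : dsubfield D G -> dmorph G f -> dmorph G g ->
  dsubfield D (fun x => G x /\ f x = g x).
Proof.
move=> HG Hf Hg; split; [|split; [|split; [|split; [|split]]]].
- by split; [exact: dsub0 | rewrite (dmorph0 HG Hf) (dmorph0 HG Hg)].
- by split; [exact: dsub1 | rewrite (dmorph1 Hf) (dmorph1 Hg)].
- move=> x y [Gx ex] [Gy ey]; split; first exact: dsubB.
  by rewrite (dmorphB HG Hf) // (dmorphB HG Hg) // ex ey.
- move=> x y [Gx ex] [Gy ey]; split; first exact: dsubM.
  by rewrite (dmorphM Hf) // (dmorphM Hg) // ex ey.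
- by move=> x [Gx ex]; split; [exact: dsubV | rewrite (dmorphV HG Hf) // (dmorphV HG Hg) // ex].
- by move=> x [Gx ex]; split; [exact: dsub_der | rewrite (dmorph_der Hf) // (dmorph_der Hg) // ex].
Qed.

Record dcorr (R : A -> A -> Prop) : Prop := DCorr {
  dcorrD : forall x y x' y', R x y -> R x' y' -> R (x + x') (y + y');
  dcorrM : forall x y x' y', R x y -> R x' y' -> R (x * x') (y * y');
  dcorrN : forall x y, R x y -> R (- x) (- y);
  dcorrV : forall x y, R x y -> R x^-1 y^-1;
  dcorr_der : forall x y, R x y -> R (D x) (D y);
  dcorr_consts : forall x y, R x y -> D x = 0 -> y = x }.

Lemma dcorr_neq0 R x y : dcorr R -> R x y -> x != 0 -> y != 0.
Proof.
move=> HR Rxy nx; have := dcorr_consts HR (dcorrM HR Rxy (dcorrV HR Rxy)).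
rewrite mulfV // der1 => /(_ erefl); apply: contra_eq_neq => ->.
by rewrite mul0r eq_sym oner_neq0.
Qed.

Lemma dcorr_converse R : dcorr R -> dcorr (fun x y => R y x).
Proof.
move=> HR; split=> [x y x' y' ? ?|x y x' y' ? ?|x y ?|x y ?|x y ?|x y Ryx Dx0].
- exact: dcorrD.
- exact: dcorrM.
- exact: dcorrN.
- exact: dcorrV.
- exact: dcorr_der.
have Dy0 : D y = 0.
  apply/eqP; apply: contraT => ny.
  by have := dcorr_neq0 HR (dcorr_der HR Ryx) ny; rewrite Dx0 eqxx.
by rewrite (dcorr_consts HR Ryx Dy0).
Qed.

Lemma graph_dcorr (L : A -> Prop) (sg : A -> A) : dsubfield D L -> dmorph L sg ->
  (forall x, consts D L x -> sg x = x) -> dcorr (fun x y => L x /\ y = sg x).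
Proof.
move=> HL Hs sfix; split.
- by move=> x y x' y' [Lx ->] [Lx' ->]; split; [exact: dsubD | rewrite (dmorphD Hs)].
- by move=> x y x' y' [Lx ->] [Lx' ->]; split; [exact: dsubM | rewrite (dmorphM Hs)].
- by move=> x y [Lx ->]; split; [exact: dsubN | rewrite (dmorphN HL Hs)].
- by move=> x y [Lx ->]; split; [exact: dsubV | rewrite (dmorphV HL Hs)].
- by move=> x y [Lx ->]; split; [exact: dsub_der | rewrite (dmorph_der Hs)].
- by move=> x y [Lx ->] Dx0; apply: sfix.
Qed.

Lemma dcorr_sum_consts R (T : eqType) (s : seq T) (a b c : T -> A) (c0 : A) :
  dcorr R -> (forall t, t \in s -> R (a t) (b t) /\ D (c t) = 0) -> D c0 = 0 ->
  \sum_(t <- s) a t * c t = c0 -> \sum_(t <- s) b t * c t = c0.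
Proof.
move=> HR; have [n] := ubnP (size s); elim: n s a b c0 => // n IH s a b c0.
move=> /ltnSE le_sn hs Dc0 hsum.
have [[x xs dax]|noder] := classic (exists2 t, t \in s & D (a t) != 0); last first.
  rewrite -hsum; apply: eq_big_seq => t ts; have [Rt _] := hs t ts.
  rewrite (dcorr_consts HR Rt) //; case: (eqVneq (D (a t)) 0) => // dt.
  by case: noder; exists t.
have [Rx Dcx] := hs x xs.
have dbx : D (b x) != 0 := dcorr_neq0 HR (dcorr_der HR Rx) dax.
set r := rem x s.
have szr : (size r < n)%N.
  have s_gt0 : (0 < size s)%N by case: (s) xs.
  by rewrite size_rem // -ltnS prednK.
have hr t : t \in r -> R (a t) (b t) /\ D (c t) = 0 by move/mem_rem; apply: hs.
pose a' t := - D (a t) / D (a x); pose b' t := - D (b t) / D (b x).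
have hr' t : t \in r -> R (a' t) (b' t) /\ D (c t) = 0.
  move=> tr; have [Rt Dct] := hr t tr; split=> //.
  by apply: (dcorrM HR); [apply/(dcorrN HR)/(dcorr_der HR) | apply/(dcorrV HR)/(dcorr_der HR)].
have ca : c x = \sum_(t <- r) a' t * c t.
  (* Differentiating the relation eliminates the term at [x]. *)
  apply: sum_mul_isolate dax _.
  have := der_sum_consts a (fun t ts => (hs t ts).2).
  by rewrite hsum Dc0 (big_rem _ xs).
have cb : c x = \sum_(t <- r) b' t * c t by apply/esym/(IH r a') => //; rewrite -ca.
have hs'' t : t \in r -> R (a t + a x * a' t) (b t + b x * b' t) /\ D (c t) = 0.
  move=> tr; have [Rt Dct] := hr t tr; have [Rt' _] := hr' t tr.
  by split; [apply: (dcorrD HR Rt); apply: (dcorrM HR) | ].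
rewrite (big_rem _ xs) /= addrC cb -sum_mul_shift; apply: (IH r _ _ c0 szr hs'' Dc0).
by rewrite sum_mul_shift -ca addrC -hsum (big_rem _ xs).
Qed.

Definition comb (f : A -> A) (s : seq (A * A)) : A := \sum_(y <- s) f y.1 * y.2.

Definition lc_over (M C : A -> Prop) (s : seq (A * A)) : Prop :=
  forall y, y \in s -> M y.1 /\ C y.2.

Definition lc_opp (s : seq (A * A)) := [seq (- y.1, y.2) | y <- s].
Definition lc_mul (s t : seq (A * A)) := [seq (y.1 * z.1, y.2 * z.2) | y <- s, z <- t].
Definition lc_der (s : seq (A * A)) := [seq (D y.1, y.2) | y <- s].

Lemma comb_cat f s t : comb f (s ++ t) = comb f s + comb f t.
Proof. exact: big_cat. Qed.

(* By gen_frac_rep, [gen D M C] consists of the values [fval id p]. *)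
Definition frac := (seq (A * A) * seq (A * A))%type.

Definition num f (p : frac) : A := comb f p.1.
Definition den f (p : frac) : A := comb f p.2.
Definition fval f (p : frac) : A := num f p / den f p.

Definition frac_over (M C : A -> Prop) (p : frac) : Prop := lc_over M C p.1 /\ lc_over M C p.2.

Definition frac_rep (M C : A -> Prop) (x : A) (p : frac) : Prop :=
  [/\ frac_over M C p, den id p != 0 & x = fval id p].

Definition frac_add (p q : frac) : frac := (lc_mul p.1 q.2 ++ lc_mul q.1 p.2, lc_mul p.2 q.2).
Definition frac_opp (p : frac) : frac := (lc_opp p.1, p.2).
Definition frac_mul (p q : frac) : frac := (lc_mul p.1 q.1, lc_mul p.2 q.2).
Definition frac_inv (p : frac) : frac := (p.2, p.1).
Definition frac_der (p : frac) : frac :=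
  (lc_mul (lc_der p.1) p.2 ++ lc_opp (lc_mul p.1 (lc_der p.2)), lc_mul p.2 p.2).
Definition frac_elt (a : A) : frac := ([:: (a, 1)], [:: (1, 1)]).
Definition frac_const (c : A) : frac := ([:: (1, c)], [:: (1, 1)]).

Section LinearCombination.
Variables (M F : A -> Prop) (f : A -> A).
Hypotheses (HM : dsubfield D M) (HF : dsubfield D F) (Hf : dmorph M f).
Local Notation over := (lc_over M (consts D F)).

Lemma lc_over_cat s t : over s -> over t -> over (s ++ t).
Proof. by move=> os ot y; rewrite mem_cat => /orP[/os|/ot]. Qed.

Lemma lc_over_opp s : over s -> over (lc_opp s).
Proof. by move=> os _ /mapP[y /os[My Cy] ->]; split=> //; apply: dsubN. Qed.

Lemma lc_over_mul s t : over s -> over t -> over (lc_mul s t).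
Proof.
move=> os ot _ /allpairsP[[y z] [/os[My Cy] /ot[Mz Cz] ->]].
by split; [apply: dsubM | apply: dsubM (consts_dsub HF) _ _ _ _].
Qed.

Lemma lc_over_der s : over s -> over (lc_der s).
Proof. by move=> os _ /mapP[y /os[My Cy] ->]; split=> //; apply: dsub_der. Qed.

Lemma comb_opp s : over s -> comb f (lc_opp s) = - comb f s.
Proof.
move=> os; rewrite /comb big_map -sumrN; apply: eq_big_seq => y /os[My _] /=.
by rewrite (dmorphN HM Hf) // mulNr.
Qed.

Lemma comb_mul s t : over s -> over t -> comb f (lc_mul s t) = comb f s * comb f t.
Proof.
move=> os ot; rewrite /comb big_allpairs_dep mulr_suml; apply: eq_big_seq => y /os[My _].
rewrite mulr_sumr; apply: eq_big_seq => z /ot[Mz _] /=.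
by rewrite (dmorphM Hf) //; ring.
Qed.

Lemma comb_der s : over s -> comb f (lc_der s) = D (comb f s).
Proof.
move=> os; rewrite /comb der_sum_consts => [|y /os[_ [_ //]]].
by rewrite big_map; apply: eq_big_seq => y /os[My _] /=; rewrite (dmorph_der Hf).
Qed.

Local Notation fover := (frac_over M (consts D F)).

Lemma frac_over_add p q : fover p -> fover q -> fover (frac_add p q).
Proof.
by move=> [p1 p2] [q1 q2]; split; [apply: lc_over_cat|]; apply: lc_over_mul.
Qed.

Lemma frac_over_opp p : fover p -> fover (frac_opp p).
Proof. by move=> [p1 p2]; split=> //; apply: lc_over_opp. Qed.

Lemma frac_over_mul p q : fover p -> fover q -> fover (frac_mul p q).
Proof. by move=> [p1 p2] [q1 q2]; split; apply: lc_over_mul. Qed.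

Lemma frac_over_inv p : fover p -> fover (frac_inv p).
Proof. by move=> [p1 p2]; split. Qed.

Lemma frac_over_der p : fover p -> fover (frac_der p).
Proof.
move=> [p1 p2]; split; last exact: lc_over_mul.
by apply: lc_over_cat; [|apply: lc_over_opp]; apply: lc_over_mul => //; apply: lc_over_der.
Qed.

Lemma frac_over_elt a : M a -> fover (frac_elt a).
Proof.
move=> Ma; have C1 : consts D F 1 := dsub1 (consts_dsub HF).
by split=> y; rewrite inE => /eqP ->; split=> //; apply: dsub1.
Qed.

Lemma frac_over_const c : consts D F c -> fover (frac_const c).
Proof.
move=> Cc; have C1 : consts D F 1 := dsub1 (consts_dsub HF).
by split=> y; rewrite inE => /eqP ->; split=> //; apply: dsub1.
Qed.

Lemma den_add p q : fover p -> fover q ->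
  den f (frac_add p q) = den f p * den f q.
Proof. by move=> [_ p2] [_ q2]; apply: comb_mul. Qed.

Lemma den_mul p q : fover p -> fover q ->
  den f (frac_mul p q) = den f p * den f q.
Proof. by move=> [_ p2] [_ q2]; apply: comb_mul. Qed.

Lemma den_der p : fover p -> den f (frac_der p) = den f p * den f p.
Proof. by move=> [_ p2]; apply: comb_mul. Qed.

Lemma fval_add p q : fover p -> fover q -> den f p != 0 -> den f q != 0 ->
  fval f (frac_add p q) = fval f p + fval f q.
Proof.
move=> [p1 p2] [q1 q2] np nq.
rewrite /fval /num /den /= comb_cat !comb_mul //; field.
by rewrite np nq.
Qed.

Lemma fval_opp p : fover p -> fval f (frac_opp p) = - fval f p.
Proof. by move=> [p1 _]; rewrite /fval /num /den /= comb_opp // mulNr. Qed.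

Lemma fval_mul p q : fover p -> fover q -> fval f (frac_mul p q) = fval f p * fval f q.
Proof. by move=> [p1 p2] [q1 q2]; rewrite /fval /num /den /= !comb_mul // invfM mulrACA. Qed.

Lemma fval_inv p : fval f (frac_inv p) = (fval f p)^-1.
Proof. by rewrite /fval /num /den invf_div. Qed.

Lemma fval_der p : fover p -> fval f (frac_der p) = D (fval f p).
Proof.
move=> [p1 p2]; have d1 := lc_over_der p1; have d2 := lc_over_der p2.
rewrite /fval /num /den /= comb_cat comb_opp; last exact: lc_over_mul.
by rewrite !comb_mul // !comb_der // der_div.
Qed.

Lemma fval_elt a : fval f (frac_elt a) = f a.
Proof. by rewrite /fval /num /den /comb !big_seq1 /= (dmorph1 Hf) !mulr1 divr1. Qed.

Lemma fval_const c : fval f (frac_const c) = c.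
Proof. by rewrite /fval /num /den /comb !big_seq1 /= (dmorph1 Hf) !mul1r divr1. Qed.

Lemma fval_eq p q : fover p -> fover q -> den f p != 0 -> den f q != 0 ->
  (fval f p = fval f q <-> num f (frac_add p (frac_opp q)) = 0).
Proof.
move=> op oq np nq; have oq' := frac_over_opp oq.
have nd : den f (frac_add p (frac_opp q)) != 0 by rewrite den_add // mulf_neq0.
transitivity (fval f (frac_add p (frac_opp q)) = 0).
  rewrite fval_add // fval_opp //; split=> [->|/eqP]; first exact: subrr.
  by rewrite subr_eq0 => /eqP.
rewrite /fval /num /den; split=> [/eqP|->]; last by rewrite mul0r.
by rewrite mulf_eq0 invr_eq0 (negPf nd) orbF => /eqP.
Qed.

End LinearCombination.

Section Generated.
Variables (M F : A -> Prop).
Hypotheses (HM : dsubfield D M) (HF : dsubfield D F).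
Local Notation rep := (frac_rep M (consts D F)).
Let Hid := dmorph_id M.

Lemma frac_rep_elt a : M a -> rep a (frac_elt a).
Proof.
move=> Ma; split; first exact: frac_over_elt.
  by rewrite /den /comb big_seq1 mulr1 oner_neq0.
by rewrite (fval_elt Hid).
Qed.

Lemma frac_rep_const c : consts D F c -> rep c (frac_const c).
Proof.
move=> Cc; split; first exact: frac_over_const.
  by rewrite /den /comb big_seq1 mulr1 oner_neq0.
by rewrite (fval_const Hid).
Qed.

Lemma frac_rep_add x y p q : rep x p -> rep y q -> rep (x + y) (frac_add p q).
Proof.
move=> [op np ->] [oq nq ->]; split; first exact: frac_over_add.
  by rewrite (den_add Hid op oq) mulf_neq0.
by rewrite (fval_add Hid op oq).
Qed.

Lemma frac_rep_opp x p : rep x p -> rep (- x) (frac_opp p).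
Proof.
by move=> [op np ->]; split; [exact: frac_over_opp | | rewrite (fval_opp HM Hid op)].
Qed.

Lemma frac_rep_mul x y p q : rep x p -> rep y q -> rep (x * y) (frac_mul p q).
Proof.
move=> [op np ->] [oq nq ->]; split; first exact: frac_over_mul.
  by rewrite (den_mul Hid op oq) mulf_neq0.
by rewrite (fval_mul Hid op oq).
Qed.

Lemma frac_rep_der x p : rep x p -> rep (D x) (frac_der p).
Proof.
move=> [op np ->]; split; first exact: frac_over_der.
  by rewrite (den_der Hid op) mulf_neq0.
by rewrite (fval_der HM HF Hid op).
Qed.

Lemma frac_rep_dsub : dsubfield D (fun x => exists p, rep x p).
Proof.
split; [|split; [|split; [|split; [|split]]]].
- by exists (frac_elt 0); exact: frac_rep_elt (dsub0 HM).
- by exists (frac_elt 1); exact: frac_rep_elt (dsub1 HM).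
- move=> x y [p xp] [q yq]; exists (frac_add p (frac_opp q)).
  exact: frac_rep_add xp (frac_rep_opp yq).
- by move=> x y [p xp] [q yq]; exists (frac_mul p q); apply: frac_rep_mul.
- move=> x [p [op np ex]]; have [p10|np1] := eqVneq (num id p) 0.
    by exists (frac_elt 0); rewrite ex /fval p10 mul0r invr0; exact: frac_rep_elt (dsub0 HM).
  by exists (frac_inv p); split; [exact: frac_over_inv | | rewrite ex fval_inv].
- by move=> x [p xp]; exists (frac_der p); apply: frac_rep_der.
Qed.

Lemma fval_in (G : A -> Prop) p : dsubfield D G -> subset_of M G ->
  subset_of (consts D F) G -> frac_over M (consts D F) p -> G (fval id p).
Proof.
move=> HG MG CG [p1 p2].
have Gcomb s : lc_over M (consts D F) s -> G (comb id s).
  move=> os; apply: (dsub_sum HG) => y /os[My Cy].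
  by apply: (dsubM HG); [exact: MG | exact: CG].
exact: (dsub_div HG (Gcomb _ p1) (Gcomb _ p2)).
Qed.

Lemma gen_frac_rep x : gen D M (consts D F) x <-> exists p, rep x p.
Proof.
split=> [|[p [op _ ->]]].
  apply: (gen_min frac_rep_dsub).
  - by move=> a Ma; exists (frac_elt a); apply: frac_rep_elt.
  - by move=> c Cc; exists (frac_const c); apply: frac_rep_const.
by apply: fval_in op => [|a|c]; [exact: gen_dsub | exact: gen_subl | exact: gen_subr].
Qed.

End Generated.

Section ConstantDescent.
Variable U : A -> Prop.
Hypothesis HU : dsubfield D U.

Definition consts_solution (T : eqType) (s : seq (T * A)) (w v : T -> A) (s' : seq (T * A)) :=
  [/\ perm_eq (map fst s') (map fst s), forall y, y \in s' -> consts D U y.2,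
      \sum_(y <- s') w y.1 * y.2 = 0 & \sum_(y <- s') v y.1 * y.2 != 0].

Lemma consts_solution_trivial (T : eqType) (s : seq (T * A)) (w v : T -> A) :
  (forall y, y \in s -> w y.1 = 0) -> \sum_(y <- s) v y.1 * y.2 != 0 ->
  exists s', consts_solution s w v s'.
Proof.
move=> w0 hv; have [/hasP[x xs vx]|/hasPn vs0] := boolP (has (fun y => v y.1 * y.2 != 0) s).
  exists ((x.1, 1) :: [seq (y.1, 0) | y <- rem x s]); split.
  - rewrite perm_sym (perm_trans (perm_map fst (perm_to_rem xs))) //= perm_cons.
    by rewrite -map_comp.
  - move=> y; rewrite in_cons => /predU1P[-> | /mapP[z _ ->]] /=.
      exact: dsub1 (consts_dsub HU).
    exact: dsub0 (consts_dsub HU).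
  - rewrite big_cons big_map big1 => [|y _]; last by rewrite mulr0.
    by rewrite /= (w0 x xs) mul0r addr0.
  - rewrite big_cons big_map big1 => [|y _]; last by rewrite mulr0.
    by rewrite addr0 mulr1; apply: contraNneq vx => ->; rewrite mul0r.
by case/eqP: hv; apply: big1_seq => y /andP[_ /vs0]; rewrite negbK => /eqP.
Qed.

Lemma consts_solution_descent (T : eqType) (s : seq (T * A)) (w v : T -> A) :
  (forall y, y \in s -> U (w y.1) /\ D y.2 = 0) ->
  \sum_(y <- s) w y.1 * y.2 = 0 -> \sum_(y <- s) v y.1 * y.2 != 0 ->
  exists s', consts_solution s w v s'.
Proof.
have [n] := ubnP (size s); elim: n s w v => // n IH s w v /ltnSE le_sn hs hw hv.
have [[x xs wx]|w0] := classic (exists2 y, y \in s & w y.1 != 0); last first.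
  apply: consts_solution_trivial hv => y ys; case: (eqVneq (w y.1) 0) => // ?.
  by case: w0; exists y.
set r := rem x s.
have szr : (size r < n)%N.
  have s_gt0 : (0 < size s)%N by case: (s) xs.
  by rewrite size_rem // -ltnS prednK.
have hr y : y \in r -> U (w y.1) /\ D y.2 = 0 by move/mem_rem; apply: hs.
have [Ux _] := hs x xs.
(* Normalising [w x.1] to 1 and differentiating gives a shorter equation over [U];
   the value [t0] of its solution supplies the constant at [x]. *)
pose m t := w t / w x.1.
have Um y : y \in r -> U (m y.1) by move=> /hr[Uy _]; apply: dsub_div.
have hm : \sum_(y <- s) m y.1 * y.2 = 0.
  by under eq_bigr do rewrite /m mulrAC; rewrite -mulr_suml hw mul0r.
have cx : x.2 = - \sum_(y <- r) m y.1 * y.2.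
  by move: hm; rewrite (big_rem _ xs) /= {1}/m divff // mul1r => /eqP; rewrite addr_eq0 => /eqP.
have hw' : \sum_(y <- r) D (m y.1) * y.2 = 0.
  have := der_sum_consts (fun y => m y.1) (fun y ys => (hs y ys).2).
  by rewrite hm der0 (big_rem _ xs) /= /m divff // der1 mul0r add0r.
pose v' t := v t + (- v x.1) * m t.
have hv' : \sum_(y <- r) v' y.1 * y.2 != 0.
  by rewrite sum_mul_shift mulNr -mulrN -cx addrC; move: hv; rewrite (big_rem _ xs).
have hr' y : y \in r -> U (D (m y.1)) /\ D y.2 = 0.
  by move=> yr; have [_ Dy] := hr y yr; split=> //; apply: dsub_der HU _ (Um y yr).
have [s'' [p'' C'' hw'' hv'']] := IH r (fun t => D (m t)) v' szr hr' hw' hv'.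
pose t0 := \sum_(y <- s'') m y.1 * y.2.
have Ct0 : consts D U t0.
  split; last by rewrite der_sum_consts // => y /C''[].
  apply: dsub_sum => // y ys; apply: dsubM => //; last by case: (C'' y ys).
  by have [z zr <-] := perm_map_fst_mem p'' ys; apply: Um.
exists ((x.1, - t0) :: s''); split.
- rewrite perm_sym (perm_trans (perm_map fst (perm_to_rem xs))) //= perm_cons.
  by rewrite perm_sym.
- by move=> y; rewrite in_cons => /predU1P[-> | /C''] //; apply: dsubN (consts_dsub HU) _ _.
- rewrite big_cons /=; have -> : \sum_(y <- s'') w y.1 * y.2 = w x.1 * t0.
    by rewrite /t0 mulr_sumr; apply: eq_bigr => y _; rewrite /m; field.
  by rewrite mulrN addNr.
- by move: hv''; rewrite big_cons sum_mul_shift /= -/t0 mulrN mulNr addrC.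
Qed.

Lemma gen_consts_descent (M : A -> Prop) x : dsubfield D M -> subset_of M U -> U x ->
  gen D M (CA D) x -> gen D M (consts D U) x.
Proof.
move=> HM MU Ux /(gen_frac_rep HM allA_dsub x) [[s t] [[os ot] nt ex]].
(* Merge [x * den - num = 0] into one equation whose terms are tagged by their
   (numerator, denominator) coefficients. *)
pose z := [seq ((0, y.1), y.2) | y <- t] ++ [seq ((y.1, 0), y.2) | y <- s].
have Mz y : y \in z -> [/\ M y.1.1, M y.1.2 & D y.2 = 0].
  rewrite mem_cat => /orP[] /mapP[[a c] /= ac ->] /=.
    by have [Ma [_ Dc]] := ot _ ac; split=> //; apply: dsub0.
  by have [Ma [_ Dc]] := os _ ac; split=> //; apply: dsub0.
pose w (ab : A * A) := x * ab.2 - ab.1.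
have hz y : y \in z -> U (w y.1) /\ D y.2 = 0.
  by move=> /Mz[Ma Mb Dc]; split=> //; exact: dsubB HU _ _ (dsubM HU Ux (MU _ Mb)) (MU _ Ma).
have hw : \sum_(y <- z) w y.1 * y.2 = 0.
  rewrite big_cat !big_map /= /w.
  under eq_bigr do rewrite subr0 -mulrA.
  under [X in _ + X]eq_bigr do rewrite mulr0 sub0r mulNr.
  by rewrite -mulr_sumr sumrN ex /fval divfK // subrr.
have hv : \sum_(y <- z) y.1.2 * y.2 != 0.
  by rewrite big_cat !big_map /= [X in _ + X]big1 ?addr0 // => y _; rewrite mul0r.
have [z' [pz Cz hw' hv']] := consts_solution_descent hz hw hv.
apply/(gen_frac_rep HM HU); exists ([seq (y.1.1, y.2) | y <- z'], [seq (y.1.2, y.2) | y <- z']).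
have Mz' y : y \in z' -> [/\ M y.1.1, M y.1.2 & consts D U y.2].
  by move=> yz'; have [y0 /Mz[? ? _] <-] := perm_map_fst_mem pz yz'; split=> //; apply: Cz.
split.
- by split=> _ /mapP[y /Mz'[? ? ?] ->].
- by rewrite /den /comb big_map.
rewrite /fval /num /den /comb !big_map /=; apply: (canRL (mulfK hv')).
have : \sum_(y <- z') w y.1 * y.2 =
    x * \sum_(y <- z') y.1.2 * y.2 - \sum_(y <- z') y.1.1 * y.2.
  by rewrite mulr_sumr -sumrB; apply: eq_bigr => y _; rewrite /w mulrBl mulrA.
by rewrite hw' => /esym/eqP; rewrite subr_eq0 => /eqP.
Qed.

End ConstantDescent.

Section Extension.
Variables (K L : A -> Prop) (sg : A -> A).
Hypotheses (HL : dsubfield D L) (KL : subset_of K L).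
Hypotheses (Hs : dmorph L sg) (sK : forall x, K x -> sg x = x) (hst : strong D L sg).
Local Notation LC := (gen D L (CA D)).
Local Notation rep := (frac_rep L (CA D)).

Lemma comb_emb_eq0 s : lc_over L (CA D) s -> comb id s = 0 <-> comb sg s = 0.
Proof.
move=> os; have HR := graph_dcorr HL Hs hst.1.
have hs y : y \in s -> (L y.1 /\ sg y.1 = sg y.1) /\ D y.2 = 0.
  by move=> /os[Ly [_ Dy]].
split=> h; first exact: dcorr_sum_consts HR hs der0 h.
exact: dcorr_sum_consts (dcorr_converse HR) hs der0 h.
Qed.

Lemma comb_emb_neq0 s : lc_over L (CA D) s -> comb id s != 0 -> comb sg s != 0.
Proof. by move=> os; apply: contra_neq => /(comb_emb_eq0 os). Qed.

Lemma fval_emb_eq p q : frac_over L (CA D) p -> frac_over L (CA D) q ->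
  den id p != 0 -> den id q != 0 -> fval id p = fval id q <-> fval sg p = fval sg q.
Proof.
move=> op oq np nq; have [lp1 lp2] := op; have [lq1 lq2] := oq.
have o1 : lc_over L (CA D) (frac_add p (frac_opp q)).1.
  by case: (frac_over_add HL (@allA_dsub) op (frac_over_opp HL oq)).
apply: iff_trans (fval_eq HL (dmorph_id L) op oq np nq) _.
apply: iff_trans (comb_emb_eq0 o1) (iff_sym _).
exact: (fval_eq HL Hs op oq (comb_emb_neq0 lp2 np) (comb_emb_neq0 lq2 nq)).
Qed.

(* Junk outside [<L, C_A>], where no representation exists. *)
Definition ext (x : A) : A := fval sg (epsilon (inhabits (frac_elt 0)) (rep x)).

Lemma ext_fval x p : rep x p -> ext x = fval sg p.
Proof.
move=> xp; have [op np ex] := xp.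
have [oq nq eq] : rep x (epsilon (inhabits (frac_elt 0)) (rep x)).
  by apply: epsilon_spec; exists p.
by apply/(fval_emb_eq oq op nq np); rewrite -eq -ex.
Qed.

Lemma ext_eq x : L x -> ext x = sg x.
Proof.
by move=> Lx; rewrite (ext_fval (frac_rep_elt HL (@allA_dsub) Lx)) (fval_elt Hs).
Qed.

Lemma ext_consts c : CA D c -> ext c = c.
Proof.
by move=> Cc; rewrite (ext_fval (frac_rep_const HL (@allA_dsub) Cc)) (fval_const Hs).
Qed.

Lemma ext_dmorph : dmorph LC ext.
Proof.
have rep_of x : LC x -> exists p, rep x p by move/(gen_frac_rep HL (@allA_dsub)).
split.
- move=> x y /rep_of[p xp] /rep_of[q yq]; have [op np _] := xp; have [oq nq _] := yq.
  rewrite (ext_fval (frac_rep_add HL (@allA_dsub) xp yq)) (ext_fval xp) (ext_fval yq).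
  by rewrite (fval_add Hs op oq) // comb_emb_neq0 //; [case: op | case: oq].
- move=> x y /rep_of[p xp] /rep_of[q yq]; have [op _ _] := xp; have [oq _ _] := yq.
  rewrite (ext_fval (frac_rep_mul HL (@allA_dsub) xp yq)) (ext_fval xp) (ext_fval yq).
  by rewrite (fval_mul Hs op oq).
- by rewrite ext_eq ?(dmorph1 Hs) //; apply: dsub1.
- move=> x /rep_of[p xp]; have [op _ _] := xp.
  rewrite (ext_fval (frac_rep_der HL (@allA_dsub) xp)) (ext_fval xp).
  by rewrite (fval_der HL (@allA_dsub) Hs op).
Qed.

Lemma ext_inj x y : LC x -> LC y -> ext x = ext y -> x = y.
Proof.
move=> /(gen_frac_rep HL (@allA_dsub))[p xp] /(gen_frac_rep HL (@allA_dsub))[q yq].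
rewrite (ext_fval xp) (ext_fval yq); have [op np ->] := xp; have [oq nq ->] := yq.
by move/(fval_emb_eq op oq np nq).
Qed.

Lemma emb_gen x : L x -> LC (sg x).
Proof. by move=> Lx; apply/(hst.2 (sg x)); apply: gen_subl; exists x. Qed.

Lemma ext_into x : LC x -> LC (ext x).
Proof.
move=> LCx; suff [] : LC x /\ LC (ext x) by [].
apply: (gen_min (preim_dsub (gen_dsub _ _) ext_dmorph (gen_dsub _ _))) LCx => [a La|c Cc].
  by split; [exact: gen_subl | rewrite ext_eq //; exact: emb_gen].
by split; rewrite ?ext_consts //; exact: gen_subr.
Qed.

Lemma ext_fix x : gen D K (CA D) x -> ext x = x.
Proof.
move=> Kx; suff [] : LC x /\ ext x = id x by [].
apply: (gen_min (eqz_dsub (gen_dsub _ _) ext_dmorph (dmorph_id _))) Kx => [a Ka|c Cc].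
  by split; [exact: gen_subl (KL Ka) | rewrite ext_eq ?sK //; exact: KL].
by split; rewrite ?ext_consts //; exact: gen_subr.
Qed.

Lemma ext_onto y : LC y -> Defs.image ext LC y.
Proof.
move/(hst.2 y); apply: (gen_min (image_dsub (gen_dsub _ _) ext_dmorph)) => [_ [a La <-]|c Cc].
  by exists a; [exact: gen_subl | exact: ext_eq].
by exists c; [exact: gen_subr | exact: ext_consts].
Qed.

Lemma ext_Gal : Gal D K L ext.
Proof.
have [eD eM e1 eder] := ext_dmorph; split; last by move=> y /ext_onto[x LCx <-]; exists x.
by do 4 (split=> //); split; [exact: ext_inj | split; [exact: ext_into | exact: ext_fix]].
Qed.

Lemma ext_unique tau : Gal D K L tau -> (forall x, L x -> tau x = sg x) ->
  forall x, LC x -> tau x = ext x.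
Proof.
move=> [Htau _] tsg x LCx; suff [] : LC x /\ tau x = ext x by [].
apply: (gen_min (eqz_dsub (gen_dsub _ _) (dhom_dmorph Htau) ext_dmorph)) LCx => [a La|c Cc].
  by split; [exact: gen_subl | rewrite tsg ?ext_eq].
have [_ [_ [_ [_ [_ [_ tfix]]]]]] := Htau.
by split; [exact: gen_subr | rewrite tfix ?ext_consts //; exact: gen_subr].
Qed.

Section Restriction.
Variables (U : A -> Prop).
Hypotheses (HU : dsubfield D U) (LU : subset_of L U) (sU : forall x, L x -> U (sg x)).
Local Notation LCU := (gen D L (consts D U)).

Lemma LCU_LC : subset_of LCU LC.
Proof. exact: gen_mono (consts_CA (F := U)). Qed.

Lemma emb_genU x : L x -> LCU (sg x).
Proof. by move=> Lx; apply: gen_consts_descent => //; [exact: sU | exact: emb_gen]. Qed.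

Lemma ext_intoU x : LCU x -> LCU (ext x).
Proof.
move=> LCUx; suff [] : LC x /\ LCU (ext x) by [].
apply: (gen_min (preim_dsub (gen_dsub _ _) ext_dmorph (gen_dsub _ _))) LCUx => [a La|c Cc].
  by split; [exact: gen_subl | rewrite ext_eq //; exact: emb_genU].
split; first exact: LCU_LC (gen_subr Cc).
by rewrite ext_consts; [exact: gen_subr | exact: consts_CA Cc].
Qed.

Lemma ext_ontoU y : LCU y -> Defs.image ext LCU y.
Proof.
have Himg := image_dsub (gen_dsub _ _) (dmorph_sub LCU_LC ext_dmorph).
have CU_img c : consts D U c -> Defs.image ext LCU c.
  by move=> Cc; exists c; [exact: gen_subr | exact: ext_consts (consts_CA Cc)].
apply: (gen_min Himg) => // a La.
have HsL := image_dsub HL Hs.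
have : gen D (Defs.image sg L) (consts D U) a.
  apply: gen_consts_descent => //; [by move=> _ [b Lb <-]; exact: sU | exact: LU |].
  by apply/(hst.2 a); exact: gen_subl.
by apply: (gen_min Himg) => // _ [b Lb <-]; exists b; [exact: gen_subl | exact: ext_eq].
Qed.

Lemma ext_GalU : GalU D U K L ext.
Proof.
have [eD eM e1 eder] := dmorph_sub LCU_LC ext_dmorph.
split; last by move=> y /ext_ontoU[x LCUx <-]; exists x.
do 4 (split=> //); split=> [x y /LCU_LC LCx /LCU_LC LCy|]; first exact: ext_inj.
split=> [|x Kx]; first exact: ext_intoU.
by apply: ext_fix; apply: gen_mono Kx => // y; apply: consts_CA.
Qed.

End Restriction.
End Extension.

Lemma dauto_comp (F E : A -> Prop) f g : dauto D F E f -> dauto D F E g -> dauto D F E (f \o g).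
Proof.
move=> [[fD [fM [f1 [fder [finj [fin ffix]]]]]] fonto].
move=> [[gD [gM [g1 [gder [ginj [gin gfix]]]]]] gonto].
split; [split; [|split; [|split; [|split; [|split; [|split]]]]]|] => /=.
- by move=> x y Ex Ey; rewrite gD // fD //; apply: gin.
- by move=> x y Ex Ey; rewrite gM // fM //; apply: gin.
- by rewrite g1 f1.
- by move=> x Ex; rewrite gder // fder //; apply: gin.
- by move=> x y Ex Ey /finj => /(_ (gin _ Ex) (gin _ Ey)); apply: ginj.
- by move=> x Ex; apply/fin/gin.
- by move=> x Fx; rewrite gfix // ffix.
by move=> z /fonto[y Ey <-]; have [x Ex <-] := gonto y Ey; exists x.
Qed.

End DifferentialField.

Lemma dhom_allA (A : fieldType) (D : A -> A) (K L U : A -> Prop) f :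
  dhom D K L U f -> dhom D K L (@allA A) f.
Proof. by move=> [fD [fM [f1 [fder [finj [_ ffix]]]]]]; do 6 split=> //. Qed.

Lemma gal_small_dhom (A : fieldType) (D : A -> A) (K L U : A -> Prop) s :
  subset_of L U -> gal_small D K L s -> dhom D K L U s.
Proof.
move=> LU [[sD [sM [s1 [sder [sinj [sin sfix]]]]]] _].
by do 5 split=> //; split=> // x /sin; apply: LU.
Qed.

Lemma strongly_normal_extension (A : fieldType) (D : A -> A) (K L U : A -> Prop) sg :
  derivation D -> dsubfield D L -> dsubfield D U -> subset_of K L -> subset_of L U ->
  strongly_normal D K L -> dhom D K L U sg ->
  [/\ Gal D K L (ext D L sg), forall x, L x -> ext D L sg x = sg x,
      forall tau, Gal D K L tau -> (forall x, L x -> tau x = sg x) ->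
        forall x, gen D L (CA D) x -> tau x = ext D L sg x
    & GalU D U K L (ext D L sg)].
Proof.
move=> hD HL HU KL LU [_ hsn] hs.
have hst := hsn sg (dhom_allA hs); have Hs := dhom_dmorph hs.
have [_ [_ [_ [_ [_ [sU sK]]]]]] := hs.
split; [exact: ext_Gal | exact: ext_eq | exact: ext_unique | exact: ext_GalU].
Qed.

Theorem lemma3p11 (A : fieldType) (D : A -> A) (K L U : A -> Prop) :
  derivation D -> char0 A -> diff_closed D -> saturated D ->
  dsubfield D K -> dsubfield D L -> dsubfield D U ->
  subset_of K L -> subset_of L U ->
  smaller_than_A U ->
  strongly_normal D K L ->
  (* an embedding of the group gal(L/K) into the group Gal(L/K) *)
  (exists Phi : (A -> A) -> (A -> A),
     [/\ (forall s, gal_small D K L s -> Gal D K L (Phi s)),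
         (forall s t, gal_small D K L s -> gal_small D K L t ->
            (forall x, L x -> s x = t x) ->
            forall x, gen D L (CA D) x -> Phi s x = Phi t x),
         (forall s t, gal_small D K L s -> gal_small D K L t ->
            forall x, gen D L (CA D) x -> Phi (s \o t) x = (Phi s \o Phi t) x) &
         (forall s t, gal_small D K L s -> gal_small D K L t ->
            (forall x, gen D L (CA D) x -> Phi s x = Phi t x) ->
            forall x, L x -> s x = t x)]) /\
  (* every sigma in Hom_K(L,U) extends uniquely to Gal(L/K), and the
     extension restricts to an element of Gal_U(L/K) *)
  (forall sigma, dhom D K L U sigma ->
     exists tau,
       [/\ Gal D K L tau, (forall x, L x -> tau x = sigma x),
           (forall tau', Gal D K L tau' -> (forall x, L x -> tau' x = sigma x) ->
              forall x, gen D L (CA D) x -> tau' x = tau x) &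
           GalU D U K L tau]).
Proof.
move=> hD _ _ _ _ HL HU KL LU _ hsn.
have extP sg := @strongly_normal_extension A D K L U sg hD HL HU KL LU hsn.
split; last by move=> sg /extP[? ? ? ?]; exists (ext D L sg).
have galP s : gal_small D K L s -> _ := fun hs => extP s (gal_small_dhom LU hs).
exists (ext D L); split.
- by move=> s /galP[].
- move=> s t /galP[_ _ uniq _] /galP[Gt et _ _] ets x LCx.
  by symmetry; apply: uniq Gt _ x LCx => y Ly; rewrite et // ets.
- move=> s t hs ht x LCx; have [Gs es _ _] := galP s hs; have [Gt et _ _] := galP t ht.
  have [_ _ uniq _] := galP _ (dauto_comp hs ht).
  symmetry; apply: uniq (dauto_comp Gs Gt) _ x LCx => y Ly.
  have [[_ [_ [_ [_ [_ [tin _]]]]]] _] := ht.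
  by rewrite /= et // es //; apply: tin.
- move=> s t /galP[_ es _ _] /galP[_ et _ _] est x Lx.
  by rewrite -es // -et // est //; apply: gen_subl.
Qed.
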